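(* Every $K$-Lusin Rothberger space is $\sigma$-compact.
   Context: All spaces are completely regular. A space is $K$-Lusin if it is an injective continuous image of a Lindelöf Čech-complete space. $X$ is Rothberger if for every sequence $(\mathcal{U}_n)_{n<\omega}$ of open covers there are $U_n\in\mathcal{U}_n$ such that $\{U_n:n<\omega\}$ covers $X$. *)

From HB Require Import structures.
From mathcomp Require Import all_boot all_order all_algebra.
From mathcomp Require Import all_classical all_reals all_analysis borel_hierarchy.
From mathcomp Require Import urysohn.
Set Implicit Arguments. Unset Strict Implicit. Unset Printing Implicit Defensive.
Import Order.TTheory GRing.Theory Num.Theory.
Local Open Scope classical_set_scope.

(* "completely regular" in the paper's standing convention = Tychonoff
   (completely regular + Hausdorff/T1) *)
Definition tychonoff_space (X : topologicalType) : Prop :=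
  completely_regular_space X /\ hausdorff_space X.

Definition open_cover (X : topologicalType) (C : set (set X)) : Prop :=
  (forall U, C U -> open U) /\ \bigcup_(U in C) U = setT.

Definition lindelof (X : topologicalType) : Prop :=
  forall C : set (set X), open_cover C ->
    exists D : set (set X), [/\ D `<=` C, countable D & \bigcup_(U in D) U = setT].

Definition embedding (X K : topologicalType) (e : X -> K) : Prop :=
  [/\ injective e, continuous e &
      forall U : set X, open U ->
        exists V : set K, open V /\ e @` U = range e `&` V].

(* Čech-complete: a Tychonoff space which is a G_delta in some
   (equivalently: every, e.g. the Stone-Čech) compactification *)
Definition cech_complete (X : topologicalType) : Prop :=
  tychonoff_space X /\
  exists (K : topologicalType) (e : X -> K),
    [/\ compact [set: K], hausdorff_space K, embedding e,
        dense (range e) & Gdelta (range e)].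

Definition K_Lusin (X : topologicalType) : Prop :=
  exists (Y : topologicalType) (f : Y -> X),
    [/\ lindelof Y, cech_complete Y, continuous f, injective f &
        range f = setT].

Definition rothberger (X : topologicalType) : Prop :=
  forall Us : nat -> set (set X), (forall n, open_cover (Us n)) ->
    exists U : nat -> set X,
      (forall n, Us n (U n)) /\ \bigcup_n U n = setT.

Definition sigma_compact (X : topologicalType) : Prop :=
  exists K : nat -> set X, (forall n, compact (K n)) /\ \bigcup_n K n = setT.

(* Let f : Y -> X be the continuous bijection from the Lindelöf Čech-complete
   space Y, and e : Y -> K an embedding onto a G_delta subset \bigcap_n G n of a
   compact Hausdorff space K.  If e(Y) is covered by countably many compact subsets
   of e(Y), their images under f \o e^-1 show that X is sigma-compact.  Otherwise
   call a closed Q "large" when Q `&` e(Y) is not so covered.  By the Lindelöf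
   property a large Q has a point of e(Y) near which it is nowhere sigma-compact,
   and it has two such points: if k were the only one, Q `&` e(Y) would be covered
   by the compact set Q `&` \bigcap_m W m, for closed neighbourhoods W m of k inside
   G m, and by the traces of the sets Q minus the interior of W m, which have no
   such point.  Hence a large set splits into two disjoint large subsets of G n,
   and iterating yields a Cantor scheme of compact subsets of e(Y).  Its images
   in X are closed pairs C n false, C n true that are disjoint and along which
   every branch meets; the Rothberger property applied to the covers
   {~` C n false, ~` C n true} selects a branch with empty intersection. *)

From mathcomp Require Import all_boot all_order.
From mathcomp Require Import all_classical all_reals all_analysis.
Set Implicit Arguments. Unset Strict Implicit. Unset Printing Implicit Defensive.
Local Open Scope classical_set_scope.

Lemma regular_closed_nbhs (T : topologicalType) (k : T) (U : set T) :
  {for k, @regular_space T} -> nbhs k U ->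
  exists W, [/\ nbhs k W, closed W & W `<=` U].
Proof.
move=> /(_ U) regk /regk[V nV clVU].
exists (closure V); split => //; last exact: closed_closure.
by apply: filterS nV; exact: subset_closure.
Qed.

Lemma cantor_intersection (T : topologicalType) (P : nat -> set T) :
  compact [set: T] -> (forall n, closed (P n)) -> (forall n, P n !=set0) ->
  (forall n, P n.+1 `<=` P n) -> \bigcap_n P n !=set0.
Proof.
move=> cT clP P0 decP.
have P_nonincr i j : (i <= j)%N -> P j `<=` P i.
  move=> /subnK <-; elim: (j - i)%N => [|d IH] //=.
  by rewrite addSn; apply: subset_trans IH; exact: decP.
pose F := filter_from [set: nat] P.
have FF : ProperFilter F.
  apply: filter_from_proper => [|i _]; last exact: P0.
  apply: filter_from_filter; first by exists 0%N.
  move=> i j _ _; exists (maxn i j) => // x Px.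
  by split; apply: (P_nonincr _ (maxn i j)); rewrite ?leq_maxl ?leq_maxr.
have [k [_ clk]] := cT F FF filterT.
by exists k => n _; apply: clP => B nB; apply: clk => //; exists n.
Qed.

Section SigmaCompactWithin.
Variables (K : topologicalType) (R : set K).

Definition sigma_compact_within (S : set K) :=
  exists F : set (set K), [/\ countable F,
    forall C, F C -> compact C /\ C `<=` R & S `<=` \bigcup_(C in F) C].

Lemma sigma_compact_withinS (S T : set K) :
  S `<=` T -> sigma_compact_within T -> sigma_compact_within S.
Proof. by move=> ST [F [cF FR TF]]; exists F; split => //; exact: subset_trans TF. Qed.

Lemma sigma_compact_within0 : sigma_compact_within set0.
Proof. by exists set0; split. Qed.

Lemma sigma_compact_within_compact (C : set K) :
  compact C -> C `<=` R -> sigma_compact_within C.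
Proof.
by move=> cC CR; exists [set C]; split => [|_ ->|x Cx] //; exists C.
Qed.

Lemma sigma_compact_within_bigcup (I : Type) (D : set I) (S : I -> set K) :
  countable D -> (forall i, D i -> sigma_compact_within (S i)) ->
  sigma_compact_within (\bigcup_(i in D) S i).
Proof.
move=> cD scS.
have /boolp.choice[F FP] : forall i, exists F : set (set K), D i ->
    [/\ countable F, forall C, F C -> compact C /\ C `<=` R &
        S i `<=` \bigcup_(C in F) C].
  move=> i; have [Di|nDi] := pselect (D i); last by exists set0.
  by have [F ?] := scS i Di; exists F.
exists (\bigcup_(i in D) F i); split.
- by apply: bigcup_countable => // i Di; case: (FP i Di).
- by move=> C [i Di FiC]; case: (FP i Di) => _ + _; apply.
- move=> x [i Di Six]; case: (FP i Di) => _ _ /(_ x Six) [C FiC Cx].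
  by exists C => //; exists i.
Qed.

Lemma sigma_compact_withinU (A B : set K) :
  sigma_compact_within A -> sigma_compact_within B ->
  sigma_compact_within (A `|` B).
Proof.
move=> scA scB.
apply: (@sigma_compact_withinS _ (\bigcup_(b in [set: bool]) if b then A else B)).
  by move=> x [Ax|Bx]; [exists true|exists false].
by apply: sigma_compact_within_bigcup => // -[].
Qed.

End SigmaCompactWithin.

Lemma embedding_compact_preimage (Y K : topologicalType) (e : Y -> K) (C : set K) :
  embedding e -> compact C -> C `<=` range e -> compact (e @^-1` C).
Proof.
move=> [einj _ eopen] cC CR F PF FC.
have [k [Ck clk]] := cC (e @ F) (fmap_proper_filter e PF) FC.
have [y _ eyk] := CR k Ck; subst k.
exists y; split => // A B FA; rewrite nbhsE => -[U [oU Uy] UB].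
have [V [oV eUV]] := eopen U oU.
have nV : nbhs (e y) V.
  apply: open_nbhs_nbhs; split => //.
  have : (e @` U) (e y) by exists y.
  by rewrite eUV => -[].
have FeA : F (e @^-1` (e @` A)) by apply: filterS FA => a Aa; exists a.
have [_ [[a Aa <-] Vea]] := clk _ _ FeA nV.
have : (e @` U) (e a) by rewrite eUV; split => //; exists a.
by move=> [u Uu /einj ua]; subst u; exists a; split => //; exact: UB.
Qed.

Section NonSigmaCompactPoints.
Variables (Y K : topologicalType) (e : Y -> K).
Hypotheses (linY : lindelof Y) (econt : continuous e).
Local Notation scw := (sigma_compact_within (range e)).

Lemma sigma_compact_within_local (Q : set K) : closed Q ->
  (forall k, Q k -> range e k -> exists2 W, nbhs k W & scw (W `&` Q `&` range e)) ->
  scw (Q `&` range e).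
Proof.
move=> clQ Qloc.
have /boolp.choice[W WP] : forall y, exists W : set K, Q (e y) ->
    nbhs (e y) W /\ scw (W `&` Q `&` range e).
  move=> y; have [Qy|nQy] := pselect (Q (e y)); last by exists set0.
  by have [W ? ?] := Qloc _ Qy (imageT e y); exists W.
pose C := [set e @^-1` (W y)° | y in e @^-1` Q] `|` [set e @^-1` ~` Q].
have oC : open_cover C.
  have open_pre A : open A -> open (e @^-1` A).
    by move=> oA; apply: open_comp => // x _; exact: econt.
  split=> [U [[y _ <-]|->]|].
  - by apply: open_pre; exact: open_interior.
  - by apply: open_pre; rewrite openC.
  - apply/seteqP; split => // y _.
    have [Qy|nQy] := pselect (Q (e y)); last by exists (e @^-1` ~` Q) => //; right.
    exists (e @^-1` (W y)°); first by left; exists y.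
    by have [nW _] := WP y Qy; exact: nbhs_singleton (nbhs_interior nW).
have [D [DC cD DT]] := linY oC.
apply: (@sigma_compact_withinS _ _ _ (\bigcup_(U in D) (e @` U `&` Q))).
  move=> k [Qk [y _ yk]]; subst k.
  have : [set: Y] y by [].
  by rewrite -DT => -[U DU Uy]; exists U => //; split => //; exact: imageP.
apply: sigma_compact_within_bigcup => // U /DC[[y Qy <-]|->].
  apply: (@sigma_compact_withinS _ _ _ (W y `&` Q `&` range e)).
    move=> _ [[u ieu <-] Qeu]; split; [split => // | exact: imageT].
    exact: interior_subset.
  by case: (WP y Qy).
apply: (@sigma_compact_withinS _ _ _ set0); last exact: sigma_compact_within0.
by move=> _ [[u nu <-] Qu].
Qed.

Definition non_sigma_compact_point (Q : set K) (k : K) :=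
  [/\ Q k, range e k & forall W, nbhs k W -> ~ scw (W `&` Q `&` range e)].

Lemma non_sigma_compact_pointS (Q Q' : set K) (k : K) : Q' `<=` Q ->
  non_sigma_compact_point Q' k -> non_sigma_compact_point Q k.
Proof.
move=> Q'Q [/Q'Q Qk ek nscW]; split => // W nW scW.
apply: (nscW W nW); apply: sigma_compact_withinS scW.
by move=> x [[Wx /Q'Q Qx] ex].
Qed.

Lemma sigma_compact_within_no_point (Q : set K) : closed Q ->
  (forall k, ~ non_sigma_compact_point Q k) -> scw (Q `&` range e).
Proof.
move=> clQ nopt; apply: sigma_compact_within_local => // k Qk ek.
apply: contrapT => noW; apply: (nopt k); split => // W nW scW.
by apply: noW; exists W.
Qed.

Definition closed_non_sigma_compact (Q : set K) := closed Q /\ ~ scw (Q `&` range e).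

Lemma closed_non_sigma_compactT :
  ~ scw (range e) -> closed_non_sigma_compact [set: K].
Proof. by rewrite /closed_non_sigma_compact setTI. Qed.

Lemma closed_non_sigma_compact_neq0 (Q : set K) :
  closed_non_sigma_compact Q -> Q !=set0.
Proof.
move=> [_ nscQ]; apply: contrapT => Q0; apply: nscQ.
apply: (sigma_compact_withinS _ (sigma_compact_within0 _)) => x [Qx _].
by apply: Q0; exists x.
Qed.

Variable G : nat -> set K.
Hypotheses (hK : hausdorff_space K) (cK : compact [set: K]).
Hypotheses (oG : forall n, open (G n)) (eG : range e = \bigcap_n G n).

Lemma range_subG n : range e `<=` G n.
Proof. by rewrite eG => x /(_ n I). Qed.

Lemma sigma_compact_within_unique_point (Q : set K) (k0 : K) : closed Q ->
  non_sigma_compact_point Q k0 ->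
  (forall k, non_sigma_compact_point Q k -> k = k0) -> scw (Q `&` range e).
Proof.
move=> clQ [_ ek0 _] k0_uniq.
have /boolp.choice[W WP] : forall m, exists W, [/\ nbhs k0 W, closed W & W `<=` G m].
  move=> m; apply: (regular_closed_nbhs (compact_regular (x := k0) hK cK filterT)).
  by apply: open_nbhs_nbhs; split => //; exact: range_subG.
have scQ_Wm m : scw ((Q `&` ~` (W m)°) `&` range e).
  apply: sigma_compact_within_no_point.
    by apply: closedI => //; apply: open_closedC; exact: open_interior.
  move=> k pk; have [[_ nWk] _ _] := pk; apply: nWk.
  rewrite (k0_uniq k (non_sigma_compact_pointS (@subIsetl _ _ _) pk)).
  by have [nW _ _] := WP m; exact: nbhs_singleton (nbhs_interior nW).
have scQW : scw (Q `&` \bigcap_m W m).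
  have clQW : closed (Q `&` \bigcap_m W m).
    by apply: closedI => //; apply: closed_bigI => m _; case: (WP m).
  apply: sigma_compact_within_compact; first exact: (subclosed_compact clQW cK).
  by move=> x [_ Wx]; rewrite eG => m _; case: (WP m) => _ _; apply; exact: Wx.
apply: (sigma_compact_withinS _ (sigma_compact_withinU
  (sigma_compact_within_bigcup (D := [set: nat]) _ (fun m _ => scQ_Wm m)) scQW)) => //.
move=> x [Qx ex]; have [Wx|] := pselect (forall m, (W m)° x).
  by right; split => // m _; exact: interior_subset.
by move=> /existsNP[m nWx]; left; exists m.
Qed.

Lemma non_sigma_compact_point_shrink (Q A : set K) (k : K) n : closed Q ->
  non_sigma_compact_point Q k -> open A -> A k ->
  exists Q', [/\ closed_non_sigma_compact Q', Q' `<=` Q `&` G n & Q' `<=` A].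
Proof.
move=> clQ [Qk ek nscW] oA Ak.
have nAG : nbhs k (A `&` G n).
  by apply: open_nbhs_nbhs; split; [exact: openI | split => //; exact: range_subG].
have [W [nW clW WAG]] := regular_closed_nbhs (compact_regular (x := k) hK cK filterT) nAG.
exists (W `&` Q); split.
- by split; [apply: closedI | exact: nscW].
- by move=> x [/WAG[_ Gx] Qx].
- by move=> x [/WAG[]].
Qed.

Lemma closed_non_sigma_compact_split (Q : set K) n :
  closed_non_sigma_compact Q -> exists Q0 Q1,
  [/\ closed_non_sigma_compact Q0, closed_non_sigma_compact Q1,
      Q0 `<=` Q `&` G n, Q1 `<=` Q `&` G n & Q0 `&` Q1 = set0].
Proof.
move=> [clQ nscQ].
have [k0 [k1 [pk0 pk1 k01]]] : exists k0 k1,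
    [/\ non_sigma_compact_point Q k0, non_sigma_compact_point Q k1 & k0 != k1].
  apply: contrapT => nopair; apply: nscQ.
  have [[k0 pk0]|nopt] := pselect (exists k0, non_sigma_compact_point Q k0).
    apply: (sigma_compact_within_unique_point clQ pk0) => k pk.
    by apply: contrapT => /eqP kk0; apply: nopair; exists k, k0.
  by apply: sigma_compact_within_no_point => // k pk; apply: nopt; exists k.
move: hK; rewrite open_hausdorff => /(_ _ _ k01).
move=> [[A B] /=]; rewrite !inE => -[Ak0 Bk1] [oA oB AB0].
have [Q0 [Q0P Q0Q Q0A]] := non_sigma_compact_point_shrink n clQ pk0 oA Ak0.
have [Q1 [Q1P Q1Q Q1B]] := non_sigma_compact_point_shrink n clQ pk1 oB Bk1.
exists Q0, Q1; split => //; rewrite -subset0 -AB0.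
by move=> x [/Q0A Ax /Q1B Bx].
Qed.

End NonSigmaCompactPoints.

Section CantorScheme.
Variables (K : topologicalType) (P : set K -> Prop) (G : nat -> set K).
Hypotheses (cK : compact [set: K]) (PT : P setT).
Hypotheses (P_closed : forall Q, P Q -> closed Q) (P_neq0 : forall Q, P Q -> Q !=set0).

Section Tree.
Variable half : set K -> nat -> bool -> set K.
Hypothesis halfP : forall Q n, P Q -> [/\ forall b, P (half Q n b),
  forall b, half Q n b `<=` Q `&` G n & half Q n false `&` half Q n true = set0].

(* The head of [s] is the last digit chosen, so the branch of [beta] of depth [n]
   is [node (rev (mkseq beta n))]. *)
Fixpoint node (s : seq bool) : set K :=
  if s is b :: s' then half (node s') (size s') b else setT.

Lemma nodeP s : P (node s).
Proof. by elim: s => //= b s IH; case: (halfP (size s) IH). Qed.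

Lemma node_cons_sub b s : node (b :: s) `<=` node s `&` G (size s).
Proof. by case: (halfP (size s) (nodeP s)) => _ sub _; exact: sub. Qed.

Lemma node_disjoint s t : size s = size t -> s != t -> node s `&` node t = set0.
Proof.
elim: s t => [|b s IH] [|c t] //= [st]; rewrite eqseq_cons negb_and.
have [-> /= bc|ts _] := eqVneq s t.
  case: (halfP (size t) (nodeP t)) => _ _.
  by case: b c bc => -[] //; rewrite setIC.
by rewrite -subset0 -(IH t st ts) => x [/node_cons_sub[? _] /node_cons_sub[? _]].
Qed.

Definition level m b := \bigcup_(t in [set: m.-tuple bool]) node (b :: tval t).

Lemma closed_level m b : closed (level m b).
Proof.
apply: closed_bigcup; first exact: finite_finset.
by move=> t _; apply: P_closed; exact: nodeP.
Qed.

Lemma level_subG m b : level m b `<=` G m.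
Proof. by move=> x [t _ /node_cons_sub[_]]; rewrite size_tuple. Qed.

Lemma level_disjoint m : level m false `&` level m true = set0.
Proof.
rewrite -subset0 => x [[t _ xt] [t' _ xt']].
by rewrite -(@node_disjoint (false :: tval t) (true :: tval t')) //= !size_tuple.
Qed.

Lemma level_branch (beta : nat -> bool) :
  exists k, forall n, level n (beta n) k.
Proof.
pose branch n := node (rev (mkseq beta n)).
have branchS n : branch n.+1 = node (beta n :: rev (mkseq beta n)).
  by rewrite /branch mkseqS rev_rcons.
have [k bk] : \bigcap_n branch n !=set0.
  apply: cantor_intersection => // [n|n|n].
  - apply: P_closed; exact: nodeP.
  - apply: P_neq0; exact: nodeP.
  - by rewrite branchS => x /node_cons_sub[].
exists k => n; have size_n : size (rev (mkseq beta n)) == n.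
  by rewrite size_rev size_mkseq.
have := bk n.+1 I; rewrite branchS => kn.
by exists (Tuple size_n).
Qed.

Lemma cantor_scheme_of_tree : exists D : nat -> bool -> set K,
  [/\ forall n b, closed (D n b) /\ D n b `<=` \bigcap_m G m,
      forall n, D n false `&` D n true = set0 &
      forall beta : nat -> bool, \bigcap_n D n (beta n) !=set0].
Proof.
pose C := \bigcap_m (level m false `|` level m true).
exists (fun n b => C `&` level n b); split.
- move=> n b; split.
    apply: closedI; last exact: closed_level.
    by apply: closed_bigI => m _; apply: closedU; exact: closed_level.
  by move=> x [Cx _] m _; case: (Cx m I) => /level_subG.
- by move=> n; rewrite -subset0 -(level_disjoint n) => x [[_ ?] [_ ?]].
- move=> beta; have [k bk] := level_branch beta.
  exists k => n _; split => // m _.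
  by case: (beta m) (bk m) => ?; [right|left].
Qed.

End Tree.

Hypothesis P_split : forall Q n, P Q -> exists Q0 Q1,
  [/\ P Q0, P Q1, Q0 `<=` Q `&` G n, Q1 `<=` Q `&` G n & Q0 `&` Q1 = set0].

Lemma cantor_scheme : exists D : nat -> bool -> set K,
  [/\ forall n b, closed (D n b) /\ D n b `<=` \bigcap_m G m,
      forall n, D n false `&` D n true = set0 &
      forall beta : nat -> bool, \bigcap_n D n (beta n) !=set0].
Proof.
have /boolp.choice[half halfP] : forall p : set K * nat, exists Q' : bool -> set K,
    P p.1 -> [/\ forall b, P (Q' b), forall b, Q' b `<=` p.1 `&` G p.2 &
                 Q' false `&` Q' true = set0].
  move=> [Q n]; have [PQ|nPQ] := pselect (P Q); last by exists (fun=> set0).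
  have [Q0 [Q1 [PQ0 PQ1 Q0Q Q1Q Q01]]] := P_split n PQ.
  by exists (fun b => if b then Q1 else Q0); split => // -[].
by apply: (cantor_scheme_of_tree (half := fun Q n => half (Q, n))) => Q n /(halfP (Q, n)).
Qed.

End CantorScheme.

Lemma rothberger_cantor_scheme (X : topologicalType) (C : nat -> bool -> set X) :
  rothberger X -> (forall n b, closed (C n b)) ->
  (forall n, C n false `&` C n true = set0) ->
  exists beta : nat -> bool, \bigcap_n C n (beta n) = set0.
Proof.
move=> roth clC C01.
have coverC n : open_cover (range (fun b => ~` C n b)).
  split=> [_ [b _ <-]|]; first by rewrite openC.
  apply/seteqP; split => // x _.
  have [C0x|nC0x] := pselect (C n false x).
    exists (~` C n true); first by exists true.
    by move=> C1x; have : (C n false `&` C n true) x by []; rewrite C01.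
  by exists (~` C n false); first by exists false.
have [U [UC Ucover]] := roth _ coverC.
have /boolp.choice[beta Ubeta] : forall n, exists b, ~` C n b = U n.
  by move=> n; have [b _ ?] := UC n; exists b.
exists beta; rewrite -subset0 => x Cx.
have : [set: X] x by [].
by rewrite -Ucover => -[n _]; rewrite -Ubeta; apply; exact: Cx.
Qed.

Lemma countable_compact_cover_sigma_compact (X : topologicalType) (F : set (set X)) :
  countable F -> (forall C, F C -> compact C) -> \bigcup_(C in F) C = setT ->
  sigma_compact X.
Proof.
move=> /pfcard_geP[->|/surjfunPex[Kn FK]] cF FX.
  exists (fun=> set0); split => [_|]; first exact: compact0.
  by rewrite -FX bigcup_set0 bigcup0.
exists Kn; split => [n|]; first by apply: cF; rewrite FK; exists n.
by rewrite -FX FK bigcup_image.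
Qed.

Section KLusinImage.
Variables (X Y K : topologicalType) (e : Y -> K) (f : Y -> X).
Hypotheses (emb : embedding e) (fcont : continuous f).

Lemma compact_image_preimage (C : set K) :
  compact C -> C `<=` range e -> compact (f @` (e @^-1` C)).
Proof.
move=> cC Ce; apply: continuous_compact; first exact: continuous_subspaceT.
exact: embedding_compact_preimage.
Qed.

Lemma sigma_compact_of_range : range f = setT ->
  sigma_compact_within (range e) (range e) -> sigma_compact X.
Proof.
move=> fsurj [F [cF FC eF]].
apply: (countable_compact_cover_sigma_compact (F := (fun C => f @` (e @^-1` C)) @` F)).
- exact: sub_countable (card_image_le _ _) cF.
- by move=> _ [C /FC[cC Ce] <-]; exact: compact_image_preimage.
- apply/seteqP; split => // y _; have [x _ <-] : range f y by rewrite fsurj.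
  have [C FeC Cex] := eF (e x) (imageT e x).
  by exists (f @` (e @^-1` C)); [exists C | exists x].
Qed.

End KLusinImage.

Theorem corollary3p34 (X : topologicalType) :
  tychonoff_space X -> K_Lusin X -> rothberger X -> sigma_compact X.
Proof.
move=> [_ hX] [Y [f [linY [_ [K [e [cK hK emb _ [G oG eG]]]]] fcont finj fsurj]]] roth.
have [_ econt _] := emb.
have [|nsc] := pselect (sigma_compact_within (range e) (range e)).
  exact: sigma_compact_of_range.
have [D [DG D01 Dbranch]] := cantor_scheme cK (closed_non_sigma_compactT nsc)
  (fun _ => @proj1 _ _) (@closed_non_sigma_compact_neq0 _ _ e)
  (closed_non_sigma_compact_split linY econt hK cK oG eG).
have De n b : compact (D n b) /\ D n b `<=` range e.
  have [clD DGnb] := DG n b; split; first exact: (subclosed_compact clD cK).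
  by rewrite eG.
pose C n b := f @` (e @^-1` D n b).
have clC n b : closed (C n b).
  by apply: (compact_closed hX); case: (De n b) => ? ?; exact: compact_image_preimage.
have C01 n : C n false `&` C n true = set0.
  rewrite -subset0 => _ [[x D0x <-] [x' D1x' /finj x'x]]; subst x'.
  by have : (D n false `&` D n true) (e x) by []; rewrite D01.
have [beta Cbeta] := rothberger_cantor_scheme roth clC C01.
have [k Dk] := Dbranch beta; have [x _ exk] := (De 0%N (beta 0%N)).2 k (Dk 0%N I).
suff : (\bigcap_n C n (beta n)) (f x) by rewrite Cbeta.
by move=> n _; exists x => //=; rewrite exk; exact: Dk.
Qed.
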